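(* Let $(Y,\lambda)\in\{-1,1\}\times\{-1,1\}^m$ follow the Ising model $$P(Y,\lambda)=\frac1Z\exp\Big(\theta_Y Y+\sum_i\theta_i\lambda_iY+\sum_{(i,j)\in E_\lambda}\theta_{ij}\lambda_i\lambda_j\Big),$$ with all canonical parameters positive. Here $E_\lambda$ is a set of $|E_\lambda|=d$ unordered pairs of distinct sources, each source in at most one pair. For a source $i$ that belongs to some pair in $E_\lambda$, $$\bar a_i-a_i\in\Big[\frac{\varepsilon_{\min}b_{\min}}{m-1}-\frac{(d-1)\varepsilon_{\max}}{(m-1)(m-2)b_{\min}^2a_{\min}^2},\ \frac{\varepsilon_{\max}}{(m-1)b_{\min}a_{\min}}\Big].$$ For a source $i$ that belongs to no pair in $E_\lambda$, $$\bar a_i-a_i\in\Big[\frac{-d\varepsilon_{\max}}{(m-1)(m-2)b_{\min}^2a_{\min}^2},\ \frac{-d\varepsilon_{\min}b_{\min}^2}{(m-1)(m-2)}\Big].$$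
   Context: Accuracies. - $a_i=\mathbb E[\lambda_iY]$ and $a_{\min}=\min_ia_i$. - $\bar a_i=\mathbb E_{\{j,k\}}\Big[\sqrt{\mathbb E[\lambda_i\lambda_j]\mathbb E[\lambda_i\lambda_k]/\mathbb E[\lambda_j\lambda_k]}\Big]$, where the unordered pair $\{j,k\}\subset[m]\setminus\{i\}$ is uniformly random. - $b_{\min}$ is a number at most $\min_{i\ne j}\mathbb E[\lambda_i\lambda_j]$. The paper defines it as the minimum over all pairs of both the population pairwise moments $\mathbb E[\lambda_i\lambda_j]$ and their empirical counterparts. Misspecification. For $(i,j)\in E_\lambda$, $\varepsilon_{ij}=\mathbb E[\lambda_i\lambda_j]-\mathbb E[\lambda_iY]\mathbb E[\lambda_jY]$, with $0<\varepsilon_{\min}\le\varepsilon_{ij}\le\varepsilon_{\max}$ for all $(i,j)\in E_\lambda$. *)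

From HB Require Import structures.
From mathcomp Require Import all_boot all_order all_algebra.
From mathcomp Require Import reals.
From mathcomp Require Import sequences exp.
Set Implicit Arguments. Unset Strict Implicit. Unset Printing Implicit Defensive.
Import Order.TTheory GRing.Theory Num.Theory.
Local Open Scope ring_scope.

Section Ising.
Variables (R : realType) (m : nat).

Definition spin (b : bool) : R := if b then 1 else -1.

(* Configurations: Y encoded by y : bool, lambda by l : {ffun 'I_m -> bool}. *)
Definition config := (bool * {ffun 'I_m -> bool})%type.

(* Unnormalized Ising weight
   exp(thY*Y + sum_i th_i lambda_i Y + sum_{e={i,j} in E} thE_e lambda_i lambda_j),
   the edge set E being a set of (2-element) subsets of sources. *)
Definition ising_weight (thY : R) (th : 'I_m -> R) (E : {set {set 'I_m}})
    (thE : {set 'I_m} -> R) (c : config) : R :=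
  expR (thY * spin c.1
        + \sum_(i < m) th i * spin (c.2 i) * spin c.1
        + \sum_(e in E) thE e * \prod_(i in e) spin (c.2 i)).

Definition ising (thY : R) (th : 'I_m -> R) (E : {set {set 'I_m}})
    (thE : {set 'I_m} -> R) (c : config) : R :=
  ising_weight thY th E thE c / \sum_(c' : config) ising_weight thY th E thE c'.

Definition Ex (P : config -> R) (f : config -> R) : R :=
  \sum_(c : config) P c * f c.

Definition acc (P : config -> R) (i : 'I_m) : R :=
  Ex P (fun c => spin (c.2 i) * spin c.1).

Definition mom2 (P : config -> R) (i j : 'I_m) : R :=
  Ex P (fun c => spin (c.2 i) * spin (c.2 j)).

(* a_min = min_i a_i (the seed is a_0 when m > 0, so it is a genuine minimum). *)
Definition amin (P : config -> R) : R :=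
  \big[Num.min/head 0 [seq acc P i | i <- enum 'I_m]]_(i < m) acc P i.

Definition abar (P : config -> R) (i : 'I_m) : R :=
  (\sum_(j < m) \sum_(k < m | [&& (j < k)%N, j != i & k != i])
      Num.sqrt (mom2 P i j * mom2 P i k / mom2 P j k))
  / ('C(m.-1, 2))%:R.

Definition epsm (P : config -> R) (i j : 'I_m) : R :=
  mom2 P i j - acc P i * acc P j.

End Ising.

From HB Require Import structures.
From mathcomp Require Import all_boot all_order all_algebra.
From mathcomp Require Import reals sequences exp.
From mathcomp Require Import ring lra.
Import Order.TTheory GRing.Theory Num.Theory.
Set Implicit Arguments. Unset Strict Implicit. Unset Printing Implicit Defensive.
Local Open Scope ring_scope.

(* Write mu_k = lambda_k Y. Since every edge has two ends, the energy is
   thY Y + sum_k th_k mu_k + sum_{jk in E} thE_jk mu_j mu_k, so the model factorises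
   over the blocks {k, partner of k}. Exchanging, between two independent samples,
   Y and all sources outside the block of i (keeping the mu's of that block)
   preserves the joint weight; this makes mu_i and mu_j uncorrelated, i.e.
   E[lambda_i lambda_j] = a_i a_j, whenever j is not the partner of i. Flipping
   lambda_k (and the lambda of its partner) groups configurations into orbits with
   positive contribution to E[mu_k], so every a_k is positive.

   Hence the term sqrt(E[l_i l_j] E[l_i l_k] / E[l_j l_k]) of abar_i equals a_i,
   unless {j, k} is an edge (the term is then below a_i by an amount comparable to
   eps_jk) or contains the partner of i (it is then above a_i by an amount
   comparable to the eps of that pair). Among the C(m-1, 2) pairs {j, k} avoiding i
   there are m - 2 of the second kind if i is covered and none otherwise, and
   d - 1, resp. d, of the first kind. *)

Section Spin.
Variable R : realType.

Lemma spin_mul_same (b : bool) : spin R b * spin R b = 1.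
Proof. by case: b; rewrite /spin ?mulr1 ?mulrNN ?mulr1. Qed.

Lemma spin_eqb (a b : bool) : spin R (a == b) = spin R a * spin R b.
Proof. by case: a; case: b; rewrite /spin /= ?mulr1 ?mul1r ?mulrNN ?mulr1. Qed.

Lemma spin_negb (b : bool) : spin R (~~ b) = - spin R b.
Proof. by case: b; rewrite /spin /= ?opprK. Qed.

Lemma spin_mul_le1 (a b : bool) : spin R a * spin R b <= 1.
Proof. by rewrite -spin_eqb /spin; case: (a == b); lra. Qed.

End Spin.

Lemma sumr_gt0 (R : numDomainType) (I : finType) (i0 : I) (F : I -> R) :
  (forall i, 0 < F i) -> 0 < \sum_i F i.
Proof.
move=> F_gt0; rewrite (bigD1 i0) //= ltr_pwDl //.
by apply: sumr_ge0 => i _; exact/ltW.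
Qed.

Section IsingModel.
Variables (R : realType) (m : nat) (thY : R) (th : 'I_m -> R).
Variables (E : {set {set 'I_m}}) (thE : {set 'I_m} -> R).
Local Notation W := (ising_weight thY th E thE).
Local Notation P := (ising thY th E thE).

Definition energy (c : config m) : R :=
  thY * spin R c.1
  + \sum_(i < m) th i * spin R (c.2 i) * spin R c.1
  + \sum_(e in E) thE e * \prod_(i in e) spin R (c.2 i).

Definition ising_Z : R := \sum_(c : config m) W c.

Lemma ising_weightE c : W c = expR (energy c). Proof. by []. Qed.

Lemma ising_weight_gt0 c : 0 < W c. Proof. exact: expR_gt0. Qed.

Lemma ising_Z_gt0 : 0 < ising_Z.
Proof. exact: (sumr_gt0 (true, [ffun=> true]) ising_weight_gt0). Qed.

Lemma ExE f : Ex P f = (\sum_c W c * f c) / ising_Z.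
Proof. by rewrite /Ex /ising mulr_suml; apply: eq_bigr => c _; rewrite mulrAC. Qed.

Lemma Ex_le1 f : (forall c, f c <= 1) -> Ex P f <= 1.
Proof.
move=> f_le1; rewrite ExE ler_pdivrMr ?ising_Z_gt0 // mul1r.
apply: ler_sum => c _; rewrite -[leRHS]mulr1 ler_wpM2l //.
exact/ltW/ising_weight_gt0.
Qed.

Lemma acc_le1 i : acc P i <= 1. Proof. by apply: Ex_le1 => c; exact: spin_mul_le1. Qed.

Lemma mom2_le1 i j : mom2 P i j <= 1. Proof. by apply: Ex_le1 => c; exact: spin_mul_le1. Qed.

Lemma mom2C i j : mom2 P i j = mom2 P j i.
Proof. by apply: eq_bigr => c _; rewrite (mulrC (spin R (c.2 i))). Qed.

End IsingModel.

Lemma sum_pairs_covariance (R : comPzRingType) (T : finType) (W f g : T -> R) :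
  \sum_(cc : T * T) W cc.1 * W cc.2 * ((f cc.1 - f cc.2) * (g cc.1 - g cc.2))
  = 2 * ((\sum_c W c) * (\sum_c W c * (f c * g c))
         - (\sum_c W c * f c) * (\sum_c W c * g c)).
Proof.
rewrite -(pair_bigA _ (fun c c' => W c * W c' * ((f c - f c') * (g c - g c')))) /=.
set Z := \sum_c W c; set S := \sum_c W c * (f c * g c).
set Sf := \sum_c W c * f c; set Sg := \sum_c W c * g c.
have inner c : \sum_c' W c * W c' * ((f c - f c') * (g c - g c'))
    = W c * (f c * g c) * Z - W c * f c * Sg - W c * g c * Sf + W c * S.
  rewrite !mulr_sumr -!sumrB -big_split /=.
  by apply: eq_bigr => c' _; ring.
rewrite (eq_bigr _ (fun c _ => inner c)) big_split /= !sumrB -!mulr_suml -/Z -/S -/Sf -/Sg; ring.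
Qed.

Section Agreement.
Variables (R : realType) (m : nat).

Definition agree (k : 'I_m) (c : config m) : R := spin R (c.2 k) * spin R c.1.

Lemma agreeE k c : agree k c = spin R (c.2 k == c.1).
Proof. by rewrite /agree spin_eqb. Qed.

Lemma acc_agree (P : config m -> R) i : acc P i = Ex P (agree i).
Proof. by []. Qed.

Lemma mom2_agree (P : config m -> R) i j :
  mom2 P i j = Ex P (fun c => agree i c * agree j c).
Proof.
apply: eq_bigr => c _; congr (_ * _).
by rewrite /agree mulrACA spin_mul_same mulr1.
Qed.

Lemma energy_agree thY th (E : {set {set 'I_m}}) thE c :
  (forall e, e \in E -> #|e| = 2%N) ->
  energy thY th E thE c = thY * spin R c.1 + \sum_(i < m) th i * agree i c
                          + \sum_(e in E) thE e * \prod_(k in e) agree k c.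
Proof.
move=> E2; rewrite /energy; congr (_ + _ + _).
  by apply: eq_bigr => i _; rewrite mulrA.
apply: eq_bigr => e eE; rewrite big_split /= prodr_const E2 //.
by rewrite expr2 spin_mul_same mulr1.
Qed.

End Agreement.

Section BlockSwap.
Variables (R : realType) (m : nat) (thY : R) (th : 'I_m -> R).
Variables (E : {set {set 'I_m}}) (thE : {set 'I_m} -> R).
Hypothesis E2 : forall e, e \in E -> #|e| = 2%N.
Local Notation W := (ising_weight thY th E thE).
Local Notation agree := (@agree R m).

Variable B : {set 'I_m}.
Hypothesis B_saturated : forall e, e \in E -> (e \subset B) || [disjoint e & B].

(* Exchange Y and the sources outside B; the sources in B are re-aligned with the
   new Y so that their agreements lambda_k Y stay put. *)
Definition block_swap (cc : config m * config m) : config m * config m :=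
  ((cc.2.1, [ffun k => if k \in B then cc.1.2 k == (cc.1.1 == cc.2.1) else cc.2.2 k]),
   (cc.1.1, [ffun k => if k \in B then cc.2.2 k == (cc.1.1 == cc.2.1) else cc.1.2 k])).

Lemma block_swapK : involutive block_swap.
Proof.
case=> [[y l] [y' l']]; rewrite /block_swap /=; congr (_, _); congr (_, _);
  apply/ffunP => k; rewrite !ffunE; case: (k \in B) => //;
  by case: (l k); case: (l' k); case: y; case: y'.
Qed.

Lemma agree_block_swap1 k cc :
  agree k (block_swap cc).1 = if k \in B then agree k cc.1 else agree k cc.2.
Proof.
rewrite /agree /= ffunE; case: (k \in B) => //.
by rewrite !spin_eqb -!mulrA spin_mul_same mulr1.
Qed.

Lemma agree_block_swap2 k cc :
  agree k (block_swap cc).2 = if k \in B then agree k cc.2 else agree k cc.1.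
Proof.
rewrite /agree /= ffunE; case: (k \in B) => //.
by rewrite !spin_eqb (mulrC (spin R cc.1.1)) -!mulrA spin_mul_same mulr1.
Qed.

Lemma prod_agree_block_swap e cc : e \in E ->
  \prod_(k in e) agree k (block_swap cc).1 + \prod_(k in e) agree k (block_swap cc).2
  = \prod_(k in e) agree k cc.1 + \prod_(k in e) agree k cc.2.
Proof.
move=> eE; case/orP: (B_saturated eE) => [/subsetP eB | eB].
  by congr (_ + _); apply: eq_bigr => k /eB kB;
    rewrite ?agree_block_swap1 ?agree_block_swap2 kB.
rewrite addrC; congr (_ + _); apply: eq_bigr => k ke;
  by rewrite ?agree_block_swap1 ?agree_block_swap2 (disjointFr eB ke).
Qed.

Lemma energy_block_swap cc :
  energy thY th E thE (block_swap cc).1 + energy thY th E thE (block_swap cc).2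
  = energy thY th E thE cc.1 + energy thY th E thE cc.2.
Proof.
rewrite !energy_agree //.
have lin : \sum_(i < m) th i * agree i (block_swap cc).1
           + \sum_(i < m) th i * agree i (block_swap cc).2
         = \sum_(i < m) th i * agree i cc.1 + \sum_(i < m) th i * agree i cc.2.
  rewrite -!big_split; apply: eq_bigr => i _.
  rewrite agree_block_swap1 agree_block_swap2.
  by case: (i \in B) => //=; exact: addrC.
have edges : \sum_(e in E) thE e * \prod_(k in e) agree k (block_swap cc).1
             + \sum_(e in E) thE e * \prod_(k in e) agree k (block_swap cc).2
           = \sum_(e in E) thE e * \prod_(k in e) agree k cc.1
             + \sum_(e in E) thE e * \prod_(k in e) agree k cc.2.
  rewrite -!big_split /=; apply: eq_bigr => e eE.
  by rewrite -!mulrDr prod_agree_block_swap.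
have spinsY : thY * spin R (block_swap cc).1.1 + thY * spin R (block_swap cc).2.1
            = thY * spin R cc.1.1 + thY * spin R cc.2.1 by rewrite addrC.
lra.
Qed.

Lemma ising_weight_block_swap cc :
  W (block_swap cc).1 * W (block_swap cc).2 = W cc.1 * W cc.2.
Proof. by rewrite !ising_weightE -!expRD energy_block_swap. Qed.

Lemma block_swap_covariance_eq0 i j : i \in B -> j \notin B ->
  \sum_(cc : config m * config m)
     W cc.1 * W cc.2 * ((agree i cc.1 - agree i cc.2) * (agree j cc.1 - agree j cc.2)) = 0.
Proof.
move=> iB jB; set G := \sum_cc _.
suff : G = - G by lra.
rewrite {1}/G (reindex_inj (can_inj block_swapK)) /= -sumrN.
apply: eq_bigr => cc _.
rewrite ising_weight_block_swap !agree_block_swap1 !agree_block_swap2 iB (negbTE jB).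
ring.
Qed.

End BlockSwap.

Section Matching.
Variables (R : realType) (m : nat) (thY : R) (th : 'I_m -> R).
Variables (E : {set {set 'I_m}}) (thE : {set 'I_m} -> R).
Hypotheses (E2 : forall e, e \in E -> #|e| = 2%N) (E_trivI : trivIset E).
Local Notation W := (ising_weight thY th E thE).
Local Notation P := (ising thY th E thE).
Local Notation agree := (@agree R m).

Lemma edge_set2 e i k : e \in E -> i \in e -> k \in e -> i != k -> e = [set i; k].
Proof.
move=> eE ie ke ik; apply/eqP; rewrite eq_sym eqEcard cards2 ik E2 //= andbT.
by apply/subsetP => x; rewrite !inE => /orP[]/eqP->.
Qed.

Lemma edge_uniq e f k : e \in E -> f \in E -> k \in e -> k \in f -> e = f.
Proof.
move=> eE fE ke kf; apply/eqP/negPn/negP => ef.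
by have := disjointFr ((trivIsetP E_trivI) e f eE fE ef) ke; rewrite kf.
Qed.

Lemma cover_partner k : k \in cover E -> exists2 p, k != p & [set k; p] \in E.
Proof.
case/bigcupP => e eE ke.
have /cards2P [x [y [xy exy]]] : #|e| == 2%N by rewrite E2.
move: (ke) eE; rewrite exy !inE => /orP[]/eqP->.
  by exists y.
by exists x; rewrite 1?eq_sym // setUC.
Qed.

Definition partner_block i : {set 'I_m} := [set k | (k == i) || ([set i; k] \in E)].

Lemma partner_block_saturated i e : e \in E ->
  (e \subset partner_block i) || [disjoint e & partner_block i].
Proof.
move=> eE; apply/orP; case: (boolP (i \in e)) => ie; [left | right].
  apply/subsetP => k ke; rewrite inE; case: eqVneq => //= ki.
  by rewrite -(edge_set2 eE ie ke) // eq_sym.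
rewrite disjoint_subset; apply/subsetP => k ke; rewrite !inE negb_or.
apply/andP; split; first by apply: contraNneq ie => <-.
by apply: contra ie => ikE; rewrite (edge_uniq eE ikE ke (set22 i k)) set21.
Qed.

Lemma mom2_indep i j : i != j -> [set i; j] \notin E ->
  mom2 P i j = acc P i * acc P j.
Proof.
move=> ij ijE.
have iB : i \in partner_block i by rewrite inE eqxx.
have jB : j \notin partner_block i by rewrite inE negb_or eq_sym ij.
have := block_swap_covariance_eq0 thY th thE E2 (@partner_block_saturated i) iB jB.
rewrite sum_pairs_covariance mom2_agree !acc_agree !ExE.
have Z0 : ising_Z thY th E thE != 0 by rewrite gt_eqF ?ising_Z_gt0.
move: Z0; rewrite /ising_Z.
set Z := \sum_c W c; set S := \sum_c _ * (_ * _).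
set Si := \sum_c W c * agree i c; set Sj := \sum_c W c * agree j c => Z0 cov.
have ZS : Z * S = Si * Sj by lra.
by rewrite mulf_div -ZS -mulf_div divff // mul1r.
Qed.

End Matching.

Lemma pair_orbit_gt0 (R : realType) (a b t X : R) (x y : bool) :
  0 < a -> 0 < b -> 0 < t ->
  0 < spin R x * (expR X - expR (X - 2 * a * spin R x - 2 * t * (spin R x * spin R y))
                  + expR (X - 2 * b * spin R y - 2 * t * (spin R x * spin R y))
                  - expR (X - 2 * b * spin R y - 2 * a * spin R x)).
Proof.
move=> a0 b0 t0.
pose eX := expR X; pose P := expR (2 * a); pose Q := expR (2 * b); pose T := expR (2 * t).
have [X0 P1 Q1 T1] : [/\ 0 < eX, 1 < P, 1 < Q & 1 < T].
  by split; rewrite ?expR_gt0 // expR_gt1 mulr_gt0.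
have [P0 Q0 T0] : [/\ P != 0, Q != 0 & T != 0] by split; apply/lt0r_neq0; lra.
have PQT0 : 0 < P * Q * T by rewrite !mulr_gt0 //; lra.
have K0 : 0 < P * Q * T - T - Q + P.
  have -> : P * Q * T - T - Q + P = (T - 1) * (P * Q - 1) + (P - 1) * (Q + 1) by ring.
  by apply: ltr_wpDl; [apply: mulr_ge0 | apply: mulr_gt0]; nra.
have gt0_of_eq D G : 0 < D -> eX * (P * Q * T - T - Q + P) / D = G -> 0 < G.
  by move=> D0 <-; apply/divr_gt0/D0/mulr_gt0.
(* In each sign case the sum is [eX (P Q T - T - Q + P) / D] for some [D > 0]. *)
case: x; case: y; rewrite /spin ?mulrNN ?mulr1 ?mulrN1 ?mul1r ?mulN1r ?opprK.
all: rewrite -!addrA !expRD ?expRN -/eX -/P -/Q -/T; clearbody eX P Q T.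
- by apply: (gt0_of_eq (P * Q * T)); [lra | field; rewrite ?P0 ?Q0 ?T0].
- by apply: (gt0_of_eq P); [lra | field; rewrite ?P0 ?Q0 ?T0].
- by apply: (gt0_of_eq Q); [lra | field; rewrite ?P0 ?Q0 ?T0].
- by apply: (gt0_of_eq T); [lra | field; rewrite ?P0 ?Q0 ?T0].
Qed.

Lemma single_orbit_gt0 (R : realType) (a X : R) (x : bool) :
  0 < a -> 0 < spin R x * (expR X - expR (X - 2 * a * spin R x)).
Proof.
move=> a0; case: x; rewrite /spin ?mulr1 ?mulrN1 ?mul1r ?mulN1r ?opprB ?subr_gt0 ltr_expR; lra.
Qed.

Section Flip.
Variables (R : realType) (m : nat) (thY : R) (th : 'I_m -> R).
Variables (E : {set {set 'I_m}}) (thE : {set 'I_m} -> R).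
Hypotheses (E2 : forall e, e \in E -> #|e| = 2%N) (E_trivI : trivIset E).
Local Notation W := (ising_weight thY th E thE).
Local Notation energy := (energy thY th E thE).
Local Notation agree := (@agree R m).

Definition flip (k : 'I_m) (c : config m) : config m :=
  (c.1, [ffun x => if x == k then ~~ c.2 x else c.2 x]).

Lemma flipK k : involutive (flip k).
Proof.
case=> y l; congr (_, _); apply/ffunP => x; rewrite !ffunE.
by case: eqP => // _; rewrite negbK.
Qed.

Lemma agree_flip k x c : agree x (flip k c) = if x == k then - agree x c else agree x c.
Proof. by rewrite /agree /= ffunE; case: eqP => // _; rewrite spin_negb mulNr. Qed.

Lemma prod_agree_flip k (e : {set 'I_m}) c :
  \prod_(x in e) agree x (flip k c)
  = if k \in e then - \prod_(x in e) agree x c else \prod_(x in e) agree x c.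
Proof.
case: ifP => ke; last first.
  by apply: eq_bigr => x xe; rewrite agree_flip; case: eqP => // xk; rewrite -xk xe in ke.
rewrite (bigD1 k) //= [in RHS](bigD1 k) //= agree_flip eqxx mulNr; congr (- (_ * _)).
by apply: eq_bigr => x /andP[_ /negbTE xk]; rewrite agree_flip xk.
Qed.

Lemma energy_flip k c : energy (flip k c) = energy c - 2 * th k * agree k c
  - 2 * \sum_(e in E | k \in e) thE e * \prod_(x in e) agree x c.
Proof.
rewrite !energy_agree //=.
rewrite (bigD1 k) //= [in RHS](bigD1 k) //= agree_flip eqxx.
rewrite (eq_bigr (fun i => th i * agree i c)); last first.
  by move=> i /negbTE ik; rewrite agree_flip ik.
rewrite !(bigID (fun e : {set 'I_m} => k \in e) (fun e => e \in E)) /=.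
have inK : \sum_(e in E | k \in e) thE e * \prod_(x in e) agree x (flip k c)
    = - \sum_(e in E | k \in e) thE e * \prod_(x in e) agree x c.
  by rewrite -sumrN; apply: eq_bigr => e /andP[_ ke]; rewrite prod_agree_flip ke mulrN.
have outK : \sum_(e in E | k \notin e) thE e * \prod_(x in e) agree x (flip k c)
    = \sum_(e in E | k \notin e) thE e * \prod_(x in e) agree x c.
  by apply: eq_bigr => e /andP[_ /negbTE ke]; rewrite prod_agree_flip ke.
rewrite inK outK; ring.
Qed.

Lemma energy_flip_free k c : k \notin cover E ->
  energy (flip k c) = energy c - 2 * th k * agree k c.
Proof.
move=> kE; rewrite energy_flip big_pred0 ?mulr0 ?subr0 // => e.
by apply/negP => /andP[eE ke]; move/negP: kE; apply; apply/bigcupP; exists e.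
Qed.

Lemma energy_flip_pair k p c : [set k; p] \in E -> k != p ->
  energy (flip k c) = energy c - 2 * th k * agree k c
                      - 2 * thE [set k; p] * (agree k c * agree p c).
Proof.
move=> kpE kp; rewrite energy_flip (big_pred1 [set k; p]); last first.
  move=> e; apply/andP/eqP => [[eE ke]|->]; last by rewrite kpE set21.
  exact: (edge_uniq E_trivI eE kpE ke (set21 k p)).
have kp' : k \notin [set p] by rewrite inE.
by rewrite (big_setU1 _ kp') big_set1 /= mulrA.
Qed.

Hypotheses (th_gt0 : forall i, 0 < th i) (thE_gt0 : forall e, e \in E -> 0 < thE e).

Let c0 : config m := (true, [ffun=> true]).

Lemma sum_agree_free_gt0 k : k \notin cover E -> 0 < \sum_c W c * agree k c.
Proof.
move=> kE; set F := fun c => W c * agree k c.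
have -> : \sum_c F c = (\sum_c (F c + F (flip k c))) / 2.
  have flip_k : \sum_c F c = \sum_c F (flip k c) := reindex_inj (can_inj (flipK k)).
  by rewrite big_split /= -flip_k; field.
apply: divr_gt0 => //; apply: (sumr_gt0 c0) => c.
rewrite /F !ising_weightE energy_flip_free // agree_flip eqxx agreeE.
have := single_orbit_gt0 (energy c) (c.2 k == c.1) (th_gt0 k).
lra.
Qed.

Lemma sum_agree_pair_gt0 k p : k != p -> [set k; p] \in E ->
  0 < \sum_c W c * agree k c.
Proof.
move=> kp kpE; set F := fun c => W c * agree k c.
have pk : p != k by rewrite eq_sym.
have pkE : [set p; k] \in E by rewrite setUC.
have -> : \sum_c F c
    = (\sum_c (F c + F (flip k c) + F (flip p c) + F (flip k (flip p c)))) / 4.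
  have flip_k : \sum_c F c = \sum_c F (flip k c) := reindex_inj (can_inj (flipK k)).
  have flip_p : \sum_c F c = \sum_c F (flip p c) := reindex_inj (can_inj (flipK p)).
  have flip_kp : \sum_c F c = \sum_c F (flip k (flip p c)).
    exact: reindex_inj (inj_comp (can_inj (flipK k)) (can_inj (flipK p))).
  by rewrite !big_split /= -flip_k -flip_p -flip_kp; field.
apply: divr_gt0 => //; apply: (sumr_gt0 c0) => c.
have agree_pk : agree p (flip k c) = agree p c by rewrite agree_flip (negbTE pk).
have agree_kp : agree k (flip p c) = agree k c by rewrite agree_flip (negbTE kp).
have e1 := energy_flip_pair c kpE kp.
have e2 := energy_flip_pair c pkE pk; rewrite setUC [agree p c * _]mulrC in e2.
have e3 : energy (flip k (flip p c))
    = energy c - 2 * th p * agree p c - 2 * th k * agree k c.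
  by rewrite (energy_flip_pair _ kpE kp) e2 agree_kp agree_flip eqxx; ring.
rewrite /F !ising_weightE e1 e2 e3 !agree_flip eqxx (negbTE kp) !agreeE.
have := pair_orbit_gt0 (energy c) (c.2 k == c.1) (c.2 p == c.1)
  (th_gt0 k) (th_gt0 p) (thE_gt0 kpE).
lra.
Qed.

Lemma acc_gt0 k : 0 < acc (ising thY th E thE) k.
Proof.
rewrite acc_agree ExE divr_gt0 ?ising_Z_gt0 //.
case: (boolP (k \in cover E)) => [/(cover_partner E2) [p kp kpE] | kE].
  exact: sum_agree_pair_gt0 kp kpE.
exact: sum_agree_free_gt0.
Qed.

End Flip.

Section SqrtBounds.
Variable R : rcfType.

Lemma sqrt_sqr_mul (a y : R) : 0 <= a -> 0 <= y -> Num.sqrt (a * a * y) = a * Num.sqrt y.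
Proof. by move=> a0 y0; rewrite -expr2 sqrtrM ?sqr_ge0 // sqrtr_sqr ger0_norm. Qed.

Lemma sqrt_ratio_gap (x e : R) : 0 <= x -> 0 < e ->
  (x + e) * (1 - Num.sqrt (x / (x + e))) * (1 + Num.sqrt (x / (x + e))) = e.
Proof.
move=> x0 e0; set s := Num.sqrt _.
have -> : (x + e) * (1 - s) * (1 + s) = x + e - (x + e) * s ^+ 2 by ring.
have M0 : x + e != 0 by apply: lt0r_neq0; lra.
rewrite sqr_sqrtr; last by apply: divr_ge0; lra.
by rewrite [(x + e) * _]mulrC divfK //; lra.
Qed.

Lemma sqrt_ratio_between (x e : R) : 0 <= x -> 0 < e -> x + e <= 1 ->
  x <= Num.sqrt (x / (x + e)) <= 1.
Proof.
move=> x0 e0 M1; set s := Num.sqrt _.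
have M0 : 0 < x + e by lra.
have s0 : 0 <= s := sqrtr_ge0 _.
have Mss : (x + e) * (s * s) = x.
  rewrite -expr2 sqr_sqrtr; last by apply: divr_ge0; lra.
  by rewrite mulrC divfK ?lt0r_neq0.
have s1 : s <= 1.
  have : s * s <= 1 by rewrite -(ler_pM2l M0) Mss mulr1; lra.
  by nra.
apply/andP; split => //.
have : (x + e) * (s * s) <= s * s by rewrite ler_piMl ?mulr_ge0.
have : s * s <= s by rewrite ler_piMl.
lra.
Qed.

Lemma edge_term_bounds (ai aj ak e b A : R) :
  0 < A -> A <= aj -> A <= ak -> 0 < e -> b <= aj * ak + e -> aj * ak + e <= 1 ->
  0 < b -> b <= ai -> ai <= 1 ->
  - (e / (2 * b ^+ 2 * A ^+ 2))
    <= Num.sqrt (ai * aj * (ai * ak) / (aj * ak + e)) - ai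
    <= - (e * b ^+ 2 / 2).
Proof.
move=> A0 Aaj Aak e0 bM M1 b0 bai ai1.
have Ax : A ^+ 2 <= aj * ak by rewrite expr2; apply: ler_pM; lra.
have x0 : 0 <= aj * ak by apply: mulr_ge0; lra.
have -> : ai * aj * (ai * ak) / (aj * ak + e) = ai * ai * (aj * ak / (aj * ak + e)).
  by field; lra.
rewrite sqrt_sqr_mul; [|lra|apply: divr_ge0; lra].
have /andP[xs s1] := sqrt_ratio_between x0 e0 M1.
have key := sqrt_ratio_gap x0 e0.
set s := Num.sqrt _ in xs s1 key *; set M := aj * ak + e in bM M1 key *.
(* [1 - s] is [e / (M (1 + s))], and [M (1 + s)] lies between [2 b^2 A^2] and [2]. *)
have lowM : 2 * b ^+ 2 * A ^+ 2 <= M * (1 + s).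
  have bb : b ^+ 2 <= b by rewrite expr2 ler_piMl //; lra.
  have A2 : 0 <= A ^+ 2 := sqr_ge0 A.
  have : 2 * b ^+ 2 * A ^+ 2 <= b * (1 + s) by nra.
  have : b * (1 + s) <= M * (1 + s) by rewrite ler_pM2r; lra.
  lra.
have s1' : 0 <= 1 - s by lra.
have b1 : b <= 1 by lra.
apply/andP; split.
  rewrite -opprB lerN2 ler_pdivlMr; last by apply: mulr_gt0; nra.
  have : (ai - ai * s) * (2 * b ^+ 2 * A ^+ 2) <= (1 - s) * (2 * b ^+ 2 * A ^+ 2).
    by rewrite ler_wpM2r //; [apply: mulr_ge0; nra | nra].
  have : (1 - s) * (2 * b ^+ 2 * A ^+ 2) <= (1 - s) * (M * (1 + s)) by rewrite ler_wpM2l.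
  nra.
have M2 : M * (1 + s) <= 2 by nra.
have e2 : e <= 2 * (1 - s) by rewrite -key -mulrA mulrCA mulrC ler_wpM2r.
have : b * (1 - s) <= ai * (1 - s) by rewrite ler_wpM2r.
have : e * b ^+ 2 <= e * b by rewrite expr2 mulrA ler_piMr //; nra.
nra.
Qed.

Lemma sqrt_sqr_add (u v : R) : 0 <= u -> 0 <= v ->
  u <= Num.sqrt (u * u + v) /\ (Num.sqrt (u * u + v) - u) * (Num.sqrt (u * u + v) + u) = v.
Proof.
move=> u0 v0; set t := Num.sqrt _.
have t0 : 0 <= t := sqrtr_ge0 _.
have tt : t * t = u * u + v by rewrite -expr2 sqr_sqrtr // addr_ge0 // mulr_ge0.
by split; nra.
Qed.

Lemma partner_term_bounds (ai aq ak e b A : R) :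
  0 < ai -> ai <= 1 -> 0 < aq -> 0 < ak -> ak <= 1 -> 0 < e -> ai * aq + e <= 1 ->
  0 < b -> b <= ai * ak -> 0 < A -> A <= aq ->
  e * b / 2
    <= Num.sqrt ((ai * aq + e) * (ai * ak) / (aq * ak)) - ai
    <= e / (2 * b * A).
Proof.
move=> ai0 ai1 aq0 ak0 ak1 e0 M1 b0 bM A0 Aaq.
have -> : (ai * aq + e) * (ai * ak) / (aq * ak) = ai * ai + ai * e / aq by field; lra.
have [|tai gap] := @sqrt_sqr_add ai (ai * e / aq) (ltW ai0).
  by apply: divr_ge0; [apply: mulr_ge0|]; lra.
set t := Num.sqrt _ in tai gap *.
(* [t - ai] is [ai e / (aq (t + ai))]. *)
have key : aq * (t - ai) * (t + ai) = ai * e by rewrite -mulrA gap; field; lra.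
have bai : b <= ai by nra.
have baq : b * aq <= 1 by nra.
apply/andP; split.
  have bt : b * aq * t <= ai.
    have : (b * aq * t) * (b * aq * t) <= ai * ai.
      have tt : aq * (t * t) = aq * ai * ai + ai * e by rewrite -key; ring.
      have -> : (b * aq * t) * (b * aq * t) = (b * ai) * (b * aq) * (ai * aq + e).
        by transitivity (b * b * aq * (aq * (t * t))); [ring | rewrite tt; ring].
      have bb0 : 0 <= (b * ai) * (b * aq) by rewrite !mulr_ge0 //; lra.
      have : (b * ai) * (b * aq) * (ai * aq + e) <= (b * ai) * (b * aq) by rewrite ler_piMr.
      have : (b * ai) * (b * aq) <= b * ai by rewrite ler_piMr //; nra.
      have : b * ai <= ai * ai by rewrite ler_pM2r.
      lra.
    have : 0 <= b * aq * t by rewrite !mulr_ge0 //; lra.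
    nra.
  have : b * aq * (t + ai) <= 2 * ai by nra.
  nra.
have : 2 * aq * (t - ai) <= e by nra.
have : b * A <= aq by nra.
rewrite ler_pdivlMr; last by rewrite !mulr_gt0.
nra.
Qed.

End SqrtBounds.

Section PairCounting.
Variables (m : nat) (E : {set {set 'I_m}}).
Hypotheses (E2 : forall e, e \in E -> #|e| = 2%N) (E_trivI : trivIset E).

Definition ordered_pairs (F : {set {set 'I_m}}) : {set 'I_m * 'I_m} :=
  [set p : 'I_m * 'I_m | (p.1 < p.2)%N && ([set p.1; p.2] \in F)].

Lemma card_ordered_pairs (F : {set {set 'I_m}}) :
  (forall B, B \in F -> #|B| = 2%N) -> #|ordered_pairs F| = #|F|.
Proof.
move=> F2.
have imF : F = [set [set p.1; p.2] | p in ordered_pairs F].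
  apply/setP => B; apply/idP/imsetP => [BF | [p]]; last by rewrite inE => /andP[_ ?] ->.
  have /cards2P [x [y [xy Bxy]]] : #|B| == 2%N by rewrite F2.
  move: xy; rewrite neq_ltn => /orP[xy | yx].
    by exists (x, y); rewrite // inE xy -Bxy.
  by exists (y, x); rewrite ?inE /= ?yx setUC -Bxy.
rewrite [in RHS]imF card_in_imset // => -[a b] [c d]; rewrite !inE /= => /andP[ab _] /andP[cd _] eq.
have : a \in [set c; d] by rewrite -eq set21.
have : b \in [set c; d] by rewrite -eq set22.
rewrite !inE => /orP[]/eqP bcd /orP[]/eqP acd; subst => //.
- by rewrite ltnn in ab.
- by have := ltn_trans ab cd; rewrite ltnn.
- by rewrite ltnn in ab.
Qed.

Definition pairs_off (i : 'I_m) : {set 'I_m * 'I_m} :=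
  [set p : 'I_m * 'I_m | [&& (p.1 < p.2)%N, p.1 != i & p.2 != i]].

Definition partner_pairs i : {set 'I_m * 'I_m} :=
  [set p in pairs_off i | ([set i; p.1] \in E) || ([set i; p.2] \in E)].

Definition edge_pairs i : {set 'I_m * 'I_m} :=
  [set p in pairs_off i | [set p.1; p.2] \in E].

Definition pairs_avoiding (A : {set 'I_m}) : {set {set 'I_m}} :=
  [set B : {set 'I_m} | (B \subset A) && (#|B| == 2%N)].

Lemma card_pairs_avoiding A : #|pairs_avoiding A| = 'C(#|A|, 2).
Proof. exact: cards_draws. Qed.

Lemma pairs_avoiding2 A B : B \in pairs_avoiding A -> #|B| = 2%N.
Proof. by rewrite inE => /andP[_ /eqP]. Qed.

Lemma pairs_off_ordered i : pairs_off i = ordered_pairs (pairs_avoiding [set~ i]).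
Proof.
apply/setP => -[j k]; rewrite !inE /= subUset !sub1set !in_setC1 cards2.
case: ltngtP => //= jk.
by rewrite (_ : j != k) ?andbT //; apply: contraTneq jk => ->; rewrite ltnn.
Qed.

Lemma card_pairs_off i : #|pairs_off i| = 'C(m.-1, 2).
Proof.
by rewrite pairs_off_ordered card_ordered_pairs ?card_pairs_avoiding ?cardsC1 ?card_ord //;
  exact: pairs_avoiding2.
Qed.

Lemma card_edge_pairs i : (#|edge_pairs i| + (i \in cover E) = #|E|)%N.
Proof.
have -> : edge_pairs i = ordered_pairs [set B in E | i \notin B].
  apply/setP => -[j k]; rewrite !inE /= !negb_or (eq_sym i j) (eq_sym i k).
  by case: (j < k)%N; case: ([set j; k] \in E); rewrite /= ?andbT ?andbF.
rewrite card_ordered_pairs; last by move=> B; rewrite inE => /andP[/E2].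
rewrite -(cardsID [set B : {set 'I_m} | i \in B] E) [in RHS]addnC.
congr (_ + _)%N; first by apply: eq_card => B; rewrite !inE andbC.
case: (boolP (i \in cover E)) => [/(cover_partner E2) [q iq iqE] | iE].
  rewrite (_ : _ :&: _ = [set [set i; q]]) ?cards1 //.
  apply/setP => B; rewrite !inE; apply/andP/eqP => [[BE iB] | ->]; last by rewrite iqE set21.
  exact: (edge_uniq E_trivI BE iqE iB (set21 i q)).
apply/esym/eqP; rewrite cards_eq0; apply/eqP/setP => B; rewrite !inE.
by apply/andP => -[BE iB]; move/negP: iE; apply; apply/bigcupP; exists B.
Qed.

Lemma partner_edgeE i q x : [set i; q] \in E -> x != i -> ([set i; x] \in E) = (x == q).
Proof.
move=> iqE xi; apply/idP/eqP => [ixE | ->] //.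
have : x \in [set i; q] by rewrite -(edge_uniq E_trivI ixE iqE (set21 i x) (set21 i q)) set22.
by rewrite !inE (negbTE xi) => /eqP.
Qed.

Lemma card_partner_pairs i :
  #|partner_pairs i| = if i \in cover E then m.-2 else 0%N.
Proof.
case: (boolP (i \in cover E)) => [/(cover_partner E2) [q iq iqE] | iE]; last first.
  apply/eqP; rewrite cards_eq0; apply/eqP/setP => -[j k]; rewrite !inE /=.
  apply/negP => /andP[_ /orP[] ijE]; move/negP: iE; apply; apply/bigcupP;
    by [exists [set i; j]; rewrite ?set21 | exists [set i; k]; rewrite ?set21].
pose A := [set~ i]; pose A' := A :\ q.
have -> : partner_pairs i = ordered_pairs (pairs_avoiding A :\: pairs_avoiding A').
  apply/setP => -[j k]; rewrite !inE /= !subUset !sub1set !in_setD1 !in_setC1 cards2.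
  case: (ltngtP j k) => //= jk.
  case: (eqVneq j i) => ji; case: (eqVneq k i) => ki; rewrite /= ?andbF //.
  rewrite !(partner_edgeE iqE) // (_ : j != k); last by apply: contraTneq jk => ->; rewrite ltnn.
  by case: (j == q); case: (k == q).
rewrite card_ordered_pairs; last by move=> B /setDP[/pairs_avoiding2].
have A'A : pairs_avoiding A' \subset pairs_avoiding A.
  apply/subsetP => B; rewrite !inE => /andP[BA' ->]; rewrite andbT.
  exact: subset_trans BA' (subsetDl _ _).
rewrite cardsD (setIidPr A'A) !card_pairs_avoiding.
have cardA : #|A| = #|A'|.+1 by rewrite (cardsD1 q A) !inE eq_sym iq.
have : #|A| = m.-1 by rewrite cardsC1 card_ord.
by rewrite cardA binS bin1 addKn => <-.
Qed.

End PairCounting.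

Lemma bin2_double n : ('C(n, 2) * 2 = n * n.-1)%N.
Proof. by rewrite bin2 muln2 even_halfK // oddM; case: n => //= n; rewrite andNb. Qed.

Lemma sumr_indicator (R : pzSemiRingType) (T : finType) (S U : {set T}) (c : R) :
  U \subset S -> \sum_(x in S) c * (x \in U)%:R = c * #|U|%:R.
Proof.
move=> US; rewrite -mulr_sumr (big_setID U) /= (setIidPr US).
rewrite [X in _ + X]big1 ?addr0 => [|x /setDP[_ /negbTE ->] //].
by rewrite (eq_bigr (fun _ => 1)) ?sumr_const // => x ->.
Qed.

Section Accuracy.
Variables (R : realType) (m : nat) (thY : R) (th : 'I_m -> R).
Variables (E : {set {set 'I_m}}) (thE : {set 'I_m} -> R) (bmin epsmin epsmax : R).
Hypotheses (m3 : (3 <= m)%N) (E2 : forall e, e \in E -> #|e| = 2%N) (E_trivI : trivIset E).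
Hypotheses (th_gt0 : forall i, 0 < th i) (thE_gt0 : forall e, e \in E -> 0 < thE e).
Local Notation P := (ising thY th E thE).
Hypotheses (bmin_gt0 : 0 < bmin) (bmin_le : forall i j, i != j -> bmin <= mom2 P i j).
Hypotheses (epsmin_gt0 : 0 < epsmin)
  (eps_bounds : forall i j, i != j -> [set i; j] \in E ->
     epsmin <= epsm P i j /\ epsm P i j <= epsmax).
Local Notation a := (acc P).
Local Notation M := (mom2 P).
Local Notation A := (amin P).

Let a_gt0 k : 0 < a k := acc_gt0 thY E2 E_trivI th_gt0 thE_gt0 k.
Let a_le1 k : a k <= 1 := acc_le1 thY th E thE k.
Let M_le1 j k : M j k <= 1 := mom2_le1 thY th E thE j k.
Let M_indep i j : i != j -> [set i; j] \notin E -> M i j = a i * a j.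
Proof. exact: mom2_indep. Qed.

Lemma amin_le k : A <= a k. Proof. exact: bigmin_le. Qed.

Lemma amin_gt0 : 0 < A.
Proof.
apply: lt_bigmin => [|k _]; last exact: a_gt0.
case: (enum 'I_m) (size_enum_ord m) => [|k s] /=; last by rewrite a_gt0.
by move=> m0; move: m3; rewrite -m0.
Qed.

Lemma bmin_le_acc i j : i != j -> [set i; j] \notin E -> bmin <= a i.
Proof.
move=> ij ijE; have := bmin_le ij; rewrite M_indep //.
have := a_le1 j; have := a_gt0 i; have := a_gt0 j; nra.
Qed.

Definition abar_term i j k := Num.sqrt (M i j * M i k / M j k).

Lemma abar_term_indep i j k : j != k -> i != j -> i != k ->
  [set i; j] \notin E -> [set i; k] \notin E -> [set j; k] \notin E ->
  abar_term i j k = a i.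
Proof.
move=> jk ij ik ijE ikE jkE; rewrite /abar_term !M_indep //.
have -> : a i * a j * (a i * a k) / (a j * a k) = a i * a i * 1.
  by field; rewrite !gt_eqF.
by rewrite sqrt_sqr_mul ?ler01 ?sqrtr1 ?mulr1 // ltW.
Qed.

Lemma abar_term_edge i j k : j != k -> i != j -> i != k ->
  [set i; j] \notin E -> [set i; k] \notin E -> [set j; k] \in E ->
  - (epsmax / (2 * bmin ^+ 2 * A ^+ 2)) <= abar_term i j k - a i
    <= - (epsmin * bmin ^+ 2 / 2).
Proof.
move=> jk ij ik ijE ikE jkE; rewrite /abar_term (M_indep ij) // (M_indep ik) //.
have [eps_lo eps_hi] := eps_bounds jk jkE.
have Mjk : M j k = a j * a k + epsm P j k by rewrite /epsm; ring.
have := bmin_le jk; have := M_le1 j k; rewrite Mjk => M1 bM.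
have := edge_term_bounds amin_gt0 (amin_le j) (amin_le k) (lt_le_trans epsmin_gt0 eps_lo)
  bM M1 bmin_gt0 (bmin_le_acc ij ijE) (a_le1 i).
have A0 := amin_gt0.
have D0 : 0 < 2 * bmin ^+ 2 * A ^+ 2 by rewrite !mulr_gt0 ?exprn_gt0.
case/andP=> lo hi; apply/andP; split.
  by apply: le_trans lo; rewrite lerN2 ler_pM2r // invr_gt0.
by apply: le_trans hi _; rewrite lerN2 !ler_pM2r ?exprn_gt0 ?invr_gt0.
Qed.

Lemma abar_term_partner i q k : i != q -> [set i; q] \in E -> k != i -> k != q ->
  epsmin * bmin / 2 <= abar_term i q k - a i <= epsmax / (2 * bmin * A).
Proof.
move=> iq iqE ki kq.
have ikE : [set i; k] \notin E by rewrite (partner_edgeE E_trivI iqE ki).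
have qkE : [set q; k] \notin E.
  by rewrite (partner_edgeE E_trivI (q := i)) 1?setUC // eq_sym.
have ik : i != k by rewrite eq_sym.
have qk : q != k by rewrite eq_sym.
have [eps_lo eps_hi] := eps_bounds iq iqE.
have Miq : M i q = a i * a q + epsm P i q by rewrite /epsm; ring.
have := bmin_le ik; have := M_le1 i q; rewrite Miq (M_indep ik) // => M1 bM.
rewrite /abar_term Miq (M_indep ik) // (M_indep qk) //.
have := partner_term_bounds (a_gt0 i) (a_le1 i) (a_gt0 q) (a_gt0 k) (a_le1 k)
  (lt_le_trans epsmin_gt0 eps_lo) M1 bmin_gt0 bM amin_gt0 (amin_le q).
have D0 : 0 < 2 * bmin * A by rewrite !mulr_gt0 ?amin_gt0.
case/andP=> lo hi; apply/andP; split.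
  by apply: le_trans lo; rewrite !ler_pM2r ?invr_gt0.
by apply: le_trans hi _; rewrite ler_pM2r ?invr_gt0.
Qed.

Lemma abar_termC i j k : abar_term i j k = abar_term i k j.
Proof. by rewrite /abar_term [M i j * _]mulrC (mom2C thY th E thE j k). Qed.

Lemma abar_term_bounds i p : p \in pairs_off i ->
  epsmin * bmin / 2 * (p \in partner_pairs E i)%:R
    - epsmax / (2 * bmin ^+ 2 * A ^+ 2) * (p \in edge_pairs E i)%:R
  <= abar_term i p.1 p.2 - a i <=
  epsmax / (2 * bmin * A) * (p \in partner_pairs E i)%:R
    - epsmin * bmin ^+ 2 / 2 * (p \in edge_pairs E i)%:R.
Proof.
case: p => j k pS; have := pS; rewrite inE /= => /and3P[jk ji ki].
have jk' : j != k by apply: contraTneq jk => ->; rewrite ltnn.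
have [ij ik] : i != j /\ i != k by rewrite !(eq_sym i).
rewrite !inE /= jk ji ki /=.
case: (boolP ([set i; j] \in E)) => ijE /=.
  have jiE : [set j; i] \in E by rewrite setUC.
  have jkE : [set j; k] \notin E by rewrite (partner_edgeE E_trivI jiE) // eq_sym.
  rewrite (negbTE jkE) !mulr1 !mulr0 !subr0.
  by apply: abar_term_partner; rewrite // eq_sym.
case: (boolP ([set i; k] \in E)) => ikE /=.
  have kiE : [set k; i] \in E by rewrite setUC.
  have jkE : [set j; k] \notin E by rewrite setUC (partner_edgeE E_trivI kiE).
  rewrite (negbTE jkE) !mulr1 !mulr0 !subr0 abar_termC.
  by apply: abar_term_partner; rewrite // eq_sym.
case: (boolP ([set j; k] \in E)) => jkE /=.
  by rewrite !mulr0 !mulr1 !sub0r; exact: abar_term_edge.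
by rewrite abar_term_indep // !mulr0 !subrr lexx.
Qed.

Lemma abar_sub_acc i :
  (abar P i - a i) * ('C(m.-1, 2))%:R = \sum_(p in pairs_off i) (abar_term i p.1 p.2 - a i).
Proof.
have C0 : ('C(m.-1, 2))%:R != 0 :> R.
  by rewrite pnatr_eq0 -lt0n bin_gt0 -ltnS prednK ?(leq_trans _ m3).
rewrite sumrB sumr_const card_pairs_off mulrBl /abar divfK // mulr_natr; congr (_ - _).
by rewrite pair_big_dep; apply: eq_bigl => -[j k]; rewrite inE.
Qed.

Lemma abar_sub_acc_bounds i :
  epsmin * bmin / 2 * #|partner_pairs E i|%:R
    - epsmax / (2 * bmin ^+ 2 * A ^+ 2) * #|edge_pairs E i|%:R
  <= (abar P i - a i) * ('C(m.-1, 2))%:R <=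
  epsmax / (2 * bmin * A) * #|partner_pairs E i|%:R
    - epsmin * bmin ^+ 2 / 2 * #|edge_pairs E i|%:R.
Proof.
have PPsub : partner_pairs E i \subset pairs_off i by apply/subsetP => p; rewrite inE => /andP[].
have EPsub : edge_pairs E i \subset pairs_off i by apply/subsetP => p; rewrite inE => /andP[].
rewrite abar_sub_acc -!(sumr_indicator _ PPsub) -!(sumr_indicator _ EPsub) -!sumrB.
by apply/andP; split; apply: ler_sum => p /abar_term_bounds /andP[].
Qed.

Lemma natr_bin2_pred : ('C(m.-1, 2))%:R = (m%:R - 1) * (m%:R - 2) / 2 :> R.
Proof.
have two0 : (2 : R) != 0 by rewrite pnatr_eq0.
apply: (mulIf two0); rewrite divfK // -natrM bin2_double natrM.
by rewrite -subn2 -subn1 !natrB ?(leq_trans _ m3).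
Qed.

Let m1_gt0 : 0 < m%:R - 1 :> R.
Proof. by move: m3; rewrite -(ler_nat R); lra. Qed.

Let m2_gt0 : 0 < m%:R - 2 :> R.
Proof. by move: m3; rewrite -(ler_nat R); lra. Qed.

Let C_gt0 : 0 < (m%:R - 1) * (m%:R - 2) / 2 :> R.
Proof. by rewrite divr_gt0 ?mulr_gt0. Qed.

Lemma abar_sub_acc_covered i : i \in cover E ->
  epsmin * bmin / (m%:R - 1)
    - (#|E|%:R - 1) * epsmax / ((m%:R - 1) * (m%:R - 2) * bmin ^+ 2 * A ^+ 2)
  <= abar P i - a i <= epsmax / ((m%:R - 1) * bmin * A).
Proof.
move=> iE; have := abar_sub_acc_bounds i.
rewrite card_partner_pairs // iE natr_bin2_pred -subn2 natrB ?(leq_trans _ m3) //.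
have := card_edge_pairs E2 E_trivI i; rewrite iE => /(congr1 (fun n => n%:R : R)).
rewrite natrD /= => dE.
have -> : #|E|%:R - 1 = #|edge_pairs E i|%:R :> R by lra.
have A0 := amin_gt0.
have drop : 0 <= epsmin * bmin ^+ 2 / 2 * #|edge_pairs E i|%:R.
  by rewrite !mulr_ge0 ?invr_ge0 ?exprn_ge0 // ltW.
case/andP => lo hi; apply/andP; split; rewrite -(ler_pM2r C_gt0).
  apply: le_trans lo; rewrite le_eqVlt; apply/predU1l.
  by field; rewrite !gt_eqF.
apply: le_trans hi _; rewrite lerBlDr; apply: ler_wpDr drop _.
rewrite le_eqVlt; apply/predU1l.
by field; rewrite !gt_eqF.
Qed.

Lemma abar_sub_acc_uncovered i : i \notin cover E ->
  - #|E|%:R * epsmax / ((m%:R - 1) * (m%:R - 2) * bmin ^+ 2 * A ^+ 2)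
  <= abar P i - a i <= - #|E|%:R * epsmin * bmin ^+ 2 / ((m%:R - 1) * (m%:R - 2)).
Proof.
move=> iE; have := abar_sub_acc_bounds i.
rewrite card_partner_pairs // (negbTE iE) natr_bin2_pred.
have := card_edge_pairs E2 E_trivI i; rewrite (negbTE iE) addn0 => ->.
have A0 := amin_gt0.
case/andP => lo hi; apply/andP; split; rewrite -(ler_pM2r C_gt0).
  apply: le_trans lo; rewrite le_eqVlt; apply/predU1l.
  by field; rewrite !gt_eqF.
apply: le_trans hi _; rewrite le_eqVlt; apply/predU1l.
by field; rewrite !gt_eqF.
Qed.

End Accuracy.

Theorem lemma1 (R : realType) (m : nat) (thY : R) (th : 'I_m -> R)
    (E : {set {set 'I_m}}) (thE : {set 'I_m} -> R)
    (bmin epsmin epsmax : R) :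
  (3 <= m)%N ->
  (* E: unordered pairs of distinct sources, each source in at most one pair *)
  (forall e, e \in E -> #|e| = 2%N) ->
  trivIset E ->
  (* all canonical parameters positive *)
  0 < thY -> (forall i, 0 < th i) -> (forall e, e \in E -> 0 < thE e) ->
  let P := ising thY th E thE in
  let d : R := #|E|%:R in
  (* b_min: positive lower bound on all pairwise moments *)
  0 < bmin -> (forall i j, i != j -> bmin <= mom2 P i j) ->
  (* misspecification bounds *)
  0 < epsmin ->
  (forall i j, i != j -> [set i; j] \in E ->
     epsmin <= epsm P i j /\ epsm P i j <= epsmax) ->
  forall i : 'I_m,
    (i \in cover E ->
       epsmin * bmin / (m%:R - 1)
         - (d - 1) * epsmax
           / ((m%:R - 1) * (m%:R - 2) * bmin ^+ 2 * amin P ^+ 2)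
         <= abar P i - acc P i
       /\ abar P i - acc P i <= epsmax / ((m%:R - 1) * bmin * amin P)) /\
    (i \notin cover E ->
       - d * epsmax / ((m%:R - 1) * (m%:R - 2) * bmin ^+ 2 * amin P ^+ 2)
         <= abar P i - acc P i
       /\ abar P i - acc P i
          <= - d * epsmin * bmin ^+ 2 / ((m%:R - 1) * (m%:R - 2))).
Proof.
move=> m3 E2 E_trivI _ th_gt0 thE_gt0 P d bmin_gt0 bmin_le epsmin_gt0 eps_bounds i.
split => iE.
  by apply/andP; exact: abar_sub_acc_covered.
by apply/andP; exact: abar_sub_acc_uncovered.
Qed.
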